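(* Let $G$ be a $d$-regular graph of order $n$ with $d\ge 4$. Then \[ f_o(L(G))\ge \frac{n}{2}-\frac12\left\lfloor \frac{n}{5}\right\rfloor\ge \frac{2n}{5}. \]
   Context: All graphs are finite and simple. An induced subgraph of a graph is called odd if every vertex of it has odd degree in it. $f_o(G)$ denotes the maximum order of an odd induced subgraph of $G$. $L(G)$ is the line graph of $G$. *)

From mathcomp Require Import all_boot all_order all_algebra.
Set Implicit Arguments. Unset Strict Implicit. Unset Printing Implicit Defensive.

Definition simple_graph (T : finType) (e : rel T) : Prop :=
  symmetric e /\ irreflexive e.

Definition regular (T : finType) (e : rel T) (d : nat) : Prop :=
  forall x : T, #|[set y | e x y]| = d.

Definition edges (T : finType) (e : rel T) : {set {set T}} :=
  [set A : {set T} | [exists x, exists y, e x y && (A == [set x; y])]].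

Definition line_adj (T : finType) (e : rel T) : rel {set T} :=
  fun A B => [&& A \in edges e, B \in edges e, A != B & A :&: B != set0].

Definition odd_induced (U : finType) (V : {set U}) (adj : rel U) (S : {set U}) : bool :=
  (S \subset V) && [forall v in S, odd #|[set u in S | adj v u]|].

(* f_o: maximum order of an odd induced subgraph (the empty set qualifies). *)
Definition f_o (U : finType) (V : {set U}) (adj : rel U) : nat :=
  \max_(S : {set U} | odd_induced V adj S) #|S|.

Definition f_o_line (T : finType) (e : rel T) : nat :=
  f_o (edges e) (line_adj e).

From mathcomp Require Import all_boot all_order all_algebra.
From mathcomp Require Import zify lra.
Import GRing.Theory Num.Theory.
Set Implicit Arguments. Unset Strict Implicit. Unset Printing Implicit Defensive.

(* Let Y be a maximal stable set of G and X its complement; regularity gives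
   |Y| <= |X|, so |X| >= n/2.  The edges of G meeting Y form a bipartite graph B
   between Y and X.  In every component of B with an odd number of vertices in
   X, delete one such vertex that is not a cut vertex (a pivot).  Every
   component of what is left then meets the set S of remaining X-vertices in an
   even number of vertices, and pairing these up along paths (taking symmetric
   differences of edge sets) gives F within B whose odd-degree vertices are
   exactly S.  An edge yx of F, y in Y and x in S, has degree
   deg_F y + deg_F x - 2 in L(G)[F], which is odd; so F induces an odd subgraph
   of L(G), and |F| >= |S|.  A pivot's component contains the d >= 4
   X-neighbours of a vertex of Y and an odd number of X-vertices, hence at
   least five of them; so |S| >= 4|X|/5 >= 2n/5, and integrality turns this
   into the bound n/2 - floor(n/5)/2. *)

Definition symdiff (U : finType) (A B : {set U}) : {set U} := (A :\: B) :|: (B :\: A).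

Lemma odd_card_symdiff (U : finType) (A B : {set U}) :
  odd #|symdiff A B| = odd #|A| (+) odd #|B|.
Proof.
have disjAB : (A :\: B) :&: (B :\: A) = set0.
  by apply/setP => x; rewrite !inE; case: (x \in A); case: (x \in B).
have -> : #|symdiff A B| = #|A :\: B| + #|B :\: A|.
  by rewrite /symdiff -cardsUI disjAB cards0 addn0.
rewrite -(cardsID B A) -(cardsID A B) setIC !oddD.
by case: (odd #|B :&: A|); case: (odd _); case: (odd _).
Qed.

Lemma symdiff_sub (U : finType) (A B C : {set U}) :
  A \subset C -> B \subset C -> symdiff A B \subset C.
Proof. by move=> sAC sBC; rewrite subUset !(subset_trans (subsetDl _ _)). Qed.

Section EdgeParity.

Variable T : finType.
Implicit Types (F G : {set {set T}}) (A : {set T}) (v : T).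

Definition deg F v := #|[set A in F | v \in A]|.

Lemma odd_deg_symdiff F G v :
  odd (deg (symdiff F G) v) = odd (deg F v) (+) odd (deg G v).
Proof.
rewrite /deg -odd_card_symdiff.
suff -> : [set A in symdiff F G | v \in A] =
  symdiff [set A in F | v \in A] [set A in G | v \in A] by [].
apply/setP => A; rewrite /symdiff !inE.
by case: (A \in F); case: (A \in G); case: (v \in A).
Qed.

Lemma deg_set0 v : deg set0 v = 0.
Proof. by apply/eqP; rewrite cards_eq0; apply/eqP/setP => A; rewrite !inE. Qed.

Lemma deg_set1 A v : deg [set A] v = (v \in A).
Proof.
rewrite /deg (_ : [set B in [set A] | v \in B] = if v \in A then [set A] else set0).
  by case: (v \in A); rewrite ?cards1 ?cards0.
apply/setP => B; case: (boolP (v \in A)) => vA; rewrite !inE.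
  by case: eqP => // ->; rewrite vA.
by case: eqP => // ->; rewrite (negbTE vA).
Qed.

Lemma sum_deg_pair F x y : x != y ->
  \sum_(v in [set x; y]) deg F v = deg F x + deg F y.
Proof. by move=> xy; rewrite big_setU1 ?big_set1 // inE. Qed.

End EdgeParity.

Definition tjoin (T : finType) (r : rel T) (S : {set T}) (F : {set {set T}}) :=
  F \subset edges r /\ forall v, odd (deg F v) = (v \in S).

Definition even_components (T : finType) (r : rel T) (S : {set T}) :=
  {in S, forall x, ~~ odd #|[set v in S | connect r x v]|}.

Lemma path_tjoin (T : finType) (r : rel T) : irreflexive r ->
  forall p u, path r u p -> exists2 F : {set {set T}}, F \subset edges r &
    forall v, odd (deg F v) = (v == u) (+) (v == last u p).
Proof.
move=> irr; elim=> [|w p IH] u /=.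
  by move=> _; exists set0 => [|v]; rewrite ?sub0set ?deg_set0 ?addbb.
case/andP=> ruw /IH[F sF dF].
have uw : u != w by apply: contraTneq ruw => ->; rewrite irr.
exists (symdiff F [set [set u; w]]) => [|v].
  apply: symdiff_sub => //; rewrite sub1set inE.
  by apply/existsP; exists u; apply/existsP; exists w; rewrite ruw eqxx.
rewrite odd_deg_symdiff deg_set1 dF !inE oddb.
case: (v =P u) => [->|_]; first by rewrite (negbTE uw) /= addbC.
by case: (v == w); case: (v == last w p).
Qed.

Lemma even_components_setD2 (T : finType) (r : rel T) (S : {set T}) a c :
  connect_sym r -> a \in S -> c \in S -> a != c -> connect r a c ->
  even_components r S -> even_components r (S :\: [set a; c]).
Proof.
move=> csym aS cS ac rac evS x; rewrite inE => /andP[_ xS].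
set Q := [set v in S | connect r x v].
have -> : [set v in S :\: [set a; c] | connect r x v] = Q :\: [set a; c].
  by apply/setP => v; rewrite !inE andbA.
have evQ2 : ~~ odd #|Q :&: [set a; c]|.
  case: (boolP (connect r x a)) => rxa.
    have rxc : connect r x c by apply: connect_trans rxa rac.
    suff -> : Q :&: [set a; c] = [set a; c] by rewrite cards2 ac.
    by apply/setIidPr/subsetP => v; rewrite !inE => /orP[]/eqP->; rewrite ?aS ?cS.
  suff -> : Q :&: [set a; c] = set0 by rewrite cards0.
  apply/setP => v; rewrite !inE; apply/negP => /andP[/andP[_ rxv] /orP[]/eqP Ev].
    by move: rxa; rewrite -Ev rxv.
  by move: rxa; rewrite (connect_trans rxv) // Ev csym.
by move: (evS x xS) evQ2; rewrite -/Q -(cardsID [set a; c] Q) oddD; case: (odd _).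
Qed.

Lemma tjoin_even_components (T : finType) (r : rel T) :
  symmetric r -> irreflexive r ->
  forall S, even_components r S -> exists F, tjoin r S F.
Proof.
move=> sr irr S; have [m] := ubnP #|S|; elim: m S => // m IH S ltSm evS.
have [->|[a aS]] := set_0Vmem S.
  by exists set0; split=> [|v]; rewrite ?sub0set ?deg_set0 ?inE.
have [c cS [ca rac]] : exists2 c, c \in S & c != a /\ connect r a c.
  have := evS a aS; rewrite (cardsD1 a) !inE aS connect0 /=.
  have [->|[c]] := set_0Vmem ([set v in S | connect r a v] :\ a).
    by rewrite cards0.
  by rewrite !inE => /and3P[ca cS rac] _; exists c.
have /connectP[p pp Ec] := rac.
have [P sP dP] := path_tjoin irr pp.
have ltS'm : #|S :\: [set a; c]| < m.
  rewrite ltnS in ltSm; apply: leq_trans ltSm; apply: proper_card; apply/properP.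
  by split; [exact: subsetDl | exists a; rewrite ?inE ?eqxx].
have ac : a != c by rewrite eq_sym.
have evS' := even_components_setD2 (sym_connect_sym sr) aS cS ac rac evS.
have [F [sF dF]] := IH _ ltS'm evS'.
exists (symdiff F P); split=> [|v]; first exact: symdiff_sub.
rewrite odd_deg_symdiff dF dP -Ec !inE.
case: (v =P a) => [->|_]; first by rewrite aS (negbTE ac).
by case: (v =P c) => [->|_]; rewrite ?cS ?addbF.
Qed.

Definition induced (T : finType) (r : rel T) (P : pred T) : rel T :=
  fun x y => [&& r x y, P x & P y].

Section Induced.

Variables (T : finType) (r : rel T) (P : pred T).

Lemma induced_sym : symmetric r -> symmetric (induced r P).
Proof. by move=> sr x y; rewrite /induced sr (andbC (P x)). Qed.

Lemma connect_induced_sub x y : connect (induced r P) x y -> connect r x y.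
Proof. by apply: connect_sub => u v /and3P[ruv _ _]; apply: connect1. Qed.

Lemma connect_induced_in x y : connect (induced r P) x y -> P x -> P y.
Proof.
move=> cxy Px; have clP : closed (induced r P) P.
  by move=> u v /and3P[_ Pu Pv]; rewrite !unfold_in Pu Pv.
by have := closed_connect clP cxy; rewrite !unfold_in Px => <-.
Qed.

Lemma connect_induced x y :
  (forall w, connect r x w -> P w) -> connect r x y -> connect (induced r P) x y.
Proof.
move=> Preach /connectP[p pp ->]; apply/connectP; exists p => //.
have : all P (x :: p) by apply/allP => w /(path_connect pp); apply: Preach.
elim: p x pp {Preach} => [|z p IH] x //= /andP[rxz pp] /and3P[Px Pz Pp].
by rewrite /induced rxz Px Pz IH //= Pz.
Qed.

End Induced.

Section NonCutVertex.

Variables (T : finType) (r : rel T) (X : {set T}) (rho : T).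
Hypotheses (sr : symmetric r) (rhoX : rho \notin X).
Hypothesis outside_X : forall w, connect r rho w -> w \notin X ->
  (forall w', r w w' -> w' \in X) /\ (forall z, exists2 w', r w w' & w' != z).

Local Notation del z := (induced r (predC1 z)).

Let reach z := [set w | connect (del z) rho w].

Lemma del_neq z x y : connect (del z) x y -> x != z -> y != z.
Proof. exact: connect_induced_in. Qed.

Lemma rho_neq z : z \in X -> rho != z.
Proof. by move=> zX; apply: contraNneq rhoX => ->. Qed.

Lemma reach_neq z : z \in X -> z \notin reach z.
Proof.
by move=> zX; rewrite inE; apply/negP => /del_neq/(_ (rho_neq zX)); rewrite eqxx.
Qed.

Lemma cut_side_meets_X z u : connect r rho u -> u != z ->
  exists z', [/\ z' \in X, z' != z & connect (del z) u z'].
Proof.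
move=> ru uz; have [uX|uX] := boolP (u \in X); first by exists u; rewrite connect0.
have [uX' /(_ z)[w ruw wz]] := outside_X ru uX.
by exists w; split; rewrite ?uX' //; apply: connect1; rewrite /induced ruw /= uz.
Qed.

Lemma reach_sub z z' : z' \notin reach z -> reach z \subset reach z'.
Proof.
move=> z'R; apply/subsetP => w; rewrite !inE => rw.
have : connect (induced (del z) (predC1 z')) rho w.
  apply: connect_induced rw => w' rw'; apply: contraNneq z'R => <-.
  by rewrite inE.
by apply: connect_sub => x y /and3P[/and3P[rxy _ _] xz' yz']; apply: connect1;
  rewrite /induced rxy xz'.
Qed.

Lemma reach_adj z : z \in X -> connect r rho z -> exists2 w, r z w & w \in reach z.
Proof.
move=> zX rz; apply/exists_inP; apply: contraNT (reach_neq zX) => noadj.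
have clR : closed r (mem (reach z)).
  suff step x y : r x y -> x \in reach z -> y \in reach z.
    by move=> x y rxy; apply/idP/idP; apply: step; rewrite // sr.
  move=> rxy; rewrite !inE => rx.
  have xz : x != z := del_neq rx (rho_neq zX).
  have yz : y != z.
    apply: contraNneq noadj => Ey; apply/exists_inP; exists x; last by rewrite inE.
    by rewrite -Ey sr.
  by apply: connect_trans rx (connect1 _); rewrite /induced rxy /= xz.
by have := closed_connect clR rz; rewrite !inE connect0 => <-.
Qed.

Lemma reach_lt z u : z \in X -> connect r rho z -> connect r rho u -> u != z ->
  u \notin reach z ->
  exists2 z', (z' \in X) && connect r rho z' & #|reach z| < #|reach z'|.
Proof.
move=> zX rz ru uz uR; have [z' [z'X z'z ruz']] := cut_side_meets_X ru uz.
have z'R : z' \notin reach z.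
  apply: contra uR; rewrite !inE => rz'; apply: connect_trans rz' _.
  by rewrite (sym_connect_sym (induced_sym _ sr)).
exists z'; first by rewrite z'X (connect_trans ru (connect_induced_sub ruz')).
apply: (@leq_trans #|z |: reach z|).
  by rewrite cardsU1 (negbTE (reach_neq zX)) add1n ltnSn.
apply: subset_leq_card; rewrite subUset sub1set reach_sub //= andbT.
have [w rzw wR] := reach_adj zX rz.
have := subsetP (reach_sub z'R) w wR; rewrite !inE => rw.
apply: connect_trans rw (connect1 _); rewrite /induced sr rzw /= (eq_sym z) z'z andbT.
by apply: contraNneq z'R => <-.
Qed.

(* Take z in X maximising the component of rho in G - z: were z a cut vertex,
   a vertex of X cut off by z would give a strictly larger component. *)
Lemma exists_noncut_vertex : exists2 z, (z \in X) && connect r rho z &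
  forall u, connect r rho u -> u != z -> connect (del z) rho u.
Proof.
have [x0 rx0 _] := (outside_X (connect0 _ _) rhoX).2 rho.
have x0X := (outside_X (connect0 _ _) rhoX).1 x0 rx0.
have Px0 : (x0 \in X) && connect r rho x0 by rewrite x0X connect1.
have [z /andP[zX rz] zmax] :=
  @arg_maxnP _ x0 (fun z => (z \in X) && connect r rho z) (fun z => #|reach z|) Px0.
exists z; first by rewrite zX rz.
move=> u ru uz; apply: contraT => uR.
have [|z' /zmax le_z'z lt_zz'] := reach_lt zX rz ru uz; first by rewrite inE.
by move: (leq_trans lt_zz' le_z'z); rewrite ltnn.
Qed.

End NonCutVertex.

Lemma card_in_sum (U : finType) (A : {set U}) (P : pred U) :
  #|[set x in A | P x]| = \sum_(x in A) P x.
Proof.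
rewrite -sum1_card big_mkcond [RHS]big_mkcond /=.
by apply: eq_bigr => x _; rewrite !inE; case: (x \in A); case: (P x).
Qed.

Lemma card_le_odd_deg (T : finType) (S : {set T}) (F : {set {set T}}) :
  {in S, forall x, odd (deg F x)} -> {in F, forall A, #|A :&: S| <= 1} ->
  #|S| <= #|F|.
Proof.
move=> oddS F1; pose g x := odflt set0 [pick A in F | x \in A].
have gP x : x \in S -> g x \in F /\ x \in g x.
  move=> /oddS; rewrite /g; case: pickP => [A /andP[] //|noA].
  by rewrite /deg (eq_card0 (A := [set A in F | x \in A])) // => A; rewrite inE noA.
have ginj : {in S &, injective g}.
  move=> x x' xS x'S gx; have [gF xg] := gP x xS; have [_] := gP x' x'S.
  rewrite -gx => x'g; apply/eqP.
  by move/card_le1_eqP: (F1 _ gF) => /(_ x x'); rewrite !inE xg x'g xS x'S => ->.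
rewrite -(card_in_imset ginj); apply: subset_leq_card.
by apply/subsetP => _ /imsetP[x xS ->]; have [] := gP x xS.
Qed.

Lemma set2_eq_mem (T : finType) (u v x y : T) :
  x \in [set u; v] -> y \in [set u; v] -> x != y -> [set u; v] = [set x; y].
Proof.
rewrite !inE => /orP[]/eqP-> /orP[]/eqP->; rewrite ?eqxx // => _.
exact: setUC.
Qed.

Section LineGraph.

Variables (T : finType) (e : rel T).

Lemma line_adj_card (F : {set {set T}}) x y :
  F \subset edges e -> [set x; y] \in F -> x != y ->
  #|[set B in F | line_adj e [set x; y] B]| + 2 = deg F x + deg F y.
Proof.
move=> /subsetP sF AF xy; set A := [set x; y] in AF *.
pose Fx := [set B in F | x \in B]; pose Fy := [set B in F | y \in B].
have adjE : [set B in F | line_adj e A B] = (Fx :|: Fy) :\ A.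
  apply/setP => B; rewrite !inE /line_adj.
  case: (boolP (B \in F)) => BF; last by rewrite !andbF.
  rewrite (sF _ AF) (sF _ BF) /= eq_sym; congr (_ && _).
  apply/set0Pn/orP => [[w]|[xB|yB]]; last 2 first.
  - by exists x; rewrite !inE eqxx.
  - by exists y; rewrite !inE eqxx orbT.
  by rewrite !inE => /andP[/orP[]/eqP-> wB]; [left|right].
have FxFy : Fx :&: Fy = [set A].
  apply/setP => B; rewrite !inE.
  have [->|nBA] := eqVneq B A; first by rewrite AF !inE !eqxx orbT.
  apply/negP => /andP[/andP[BF xB] /andP[_ yB]]; move/eqP: nBA; apply.
  have := sF _ BF; rewrite inE => /existsP[u /existsP[v /andP[_ /eqP BE]]].
  by rewrite BE; apply: set2_eq_mem; rewrite -?BE.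
have AFx : A \in Fx by rewrite !inE AF eqxx.
have := cardsUI Fx Fy; rewrite FxFy cards1 (cardsD1 A) -adjE inE AFx.
by rewrite /deg -/Fx -/Fy => <-; rewrite addn2 add1n addn1.
Qed.

Lemma odd_induced_line (F : {set {set T}}) : irreflexive e -> F \subset edges e ->
  {in F, forall A : {set T}, odd (\sum_(v in A) deg F v)} ->
  odd_induced (edges e) (line_adj e) F.
Proof.
move=> ie sF oddF; rewrite /odd_induced sF; apply/forall_inP => A AF.
have := subsetP sF A AF; rewrite inE => /existsP[x /existsP[y /andP[exy /eqP AE]]].
have xy : x != y by apply: contraTneq exy => ->; rewrite ie.
have := oddF A AF; rewrite AE sum_deg_pair // -line_adj_card -?AE //.
by rewrite oddD addbF.
Qed.

End LineGraph.

Definition stable (T : finType) (e : rel T) (Y : {set T}) :=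
  {in Y &, forall x y, ~~ e x y}.

Lemma exists_maximal_stable (T : finType) (e : rel T) :
  symmetric e -> irreflexive e ->
  exists2 Y, stable e Y & forall x, x \notin Y -> exists2 y, y \in Y & e x y.
Proof.
move=> se ie; pose P (Y : {set T}) := [forall x in Y, forall y in Y, ~~ e x y].
have [|Y /maxsetP[PY maxY]] := @ex_maxset _ P.
  by exists set0; apply/forall_inP => x; rewrite inE.
exists Y => [x y xY yY | x xY].
  by move/forall_inP: PY => /(_ x xY)/forall_inP; apply.
apply/exists_inP; apply: contraNT xY => noadj.
have PxY : P (x |: Y).
  apply/forall_inP => u; rewrite !inE => /orP[/eqP->|uY];
    apply/forall_inP => v; rewrite !inE => /orP[/eqP->|vY].
  - by rewrite ie.
  - by apply: contra noadj => exv; apply/exists_inP; exists v.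
  - by apply: contra noadj => eux; apply/exists_inP; exists u; rewrite // se.
  - by move/forall_inP: PY => /(_ u uY)/forall_inP; apply.
by rewrite -(maxY _ PxY (subsetUr _ _)) setU11.
Qed.

Lemma card_stable_le_compl (T : finType) (e : rel T) d (Y : {set T}) :
  symmetric e -> regular e d -> 0 < d -> stable e Y -> #|Y| <= #|~: Y|.
Proof.
move=> se reg d_gt0 stY; rewrite -(leq_pmul2r d_gt0).
have degY y : y \in Y -> d = \sum_(x in ~: Y) e y x.
  move=> yY; rewrite -(reg y) -card_in_sum; apply: eq_card => x; rewrite !inE.
  case: (boolP (e y x)) => exy; rewrite ?andbT ?andbF //.
  by apply/esym/negP => xY; move: (stY _ _ yY xY); rewrite exy.
have degX x : \sum_(y in Y) e y x <= d.
  by rewrite -(reg x) -card_in_sum; apply: subset_leq_card; apply/subsetP => y;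
    rewrite !inE se => /andP[].
rewrite -!sum_nat_const (eq_bigr _ degY) exchange_big /=.
by apply: leq_sum => x _; apply: degX.
Qed.

Lemma card_mul_le_separated (T : finType) (r : rel T) (X D : {set T}) k :
  connect_sym r -> {in D &, forall z z', connect r z z' -> z = z'} ->
  {in D, forall z, k <= #|[set w in X | connect r z w]|} -> k * #|D| <= #|X|.
Proof.
move=> csym Dsep Dk; rewrite mulnC -sum_nat_const.
apply: (@leq_trans (\sum_(z in D) #|[set w in X | connect r z w]|)).
  exact: leq_sum.
under eq_bigr do rewrite card_in_sum.
rewrite exchange_big /= -[#|X|]sum1_card; apply: leq_sum => w _.
rewrite -card_in_sum; apply/card_le1_eqP => z z'; rewrite !inE.
move=> /andP[zD rzw] /andP[z'D rz'w]; apply: Dsep => //.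
by rewrite (connect_trans rz'w) // csym.
Qed.

Section OddLineSubgraph.

Variables (T : finType) (e : rel T) (d : nat) (Y : {set T}).
Hypotheses (se : symmetric e) (ie : irreflexive e).
Hypotheses (reg : regular e d) (d_ge4 : 4 <= d) (stY : stable e Y).
Hypothesis domY : forall x, x \notin Y -> exists2 y, y \in Y & e x y.

Local Notation X := (~: Y).

Definition yedge : rel T := fun u v => e u v && ((u \in Y) || (v \in Y)).

Lemma yedge_sym : symmetric yedge.
Proof. by move=> u v; rewrite /yedge se orbC. Qed.

Lemma yconnect_sym : connect_sym yedge.
Proof. exact: sym_connect_sym yedge_sym. Qed.

Lemma Y_adj_X y w : y \in Y -> e y w -> w \in X.
Proof. by move=> yY eyw; rewrite inE; apply: contraL eyw; apply: stY. Qed.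

Definition comp v := [set w | connect yedge v w].

Lemma comp_eq u v : connect yedge u v -> comp u = comp v.
Proof.
by move=> ruv; apply/setP => w; rewrite !inE (same_connect yconnect_sym ruv).
Qed.

Definition noncut (C : {set T}) z :=
  [&& z \in X, z \in C & [forall u in C, forall v in C,
    (u != z) && (v != z) ==> connect (induced yedge (predC1 z)) u v]].

Lemma exists_noncut a : a \in X -> exists z, noncut (comp a) z.
Proof.
move=> aX; have [rho rhoY earho] : exists2 rho, rho \in Y & e a rho.
  by apply: domY; rewrite inE in aX.
have rhoX : rho \notin X by rewrite inE negbK.
have arho : connect yedge a rho by apply: connect1; rewrite /yedge earho rhoY orbT.
have outside w : connect yedge rho w -> w \notin X ->
    (forall w', yedge w w' -> w' \in X) /\
    (forall z, exists2 w', yedge w w' & w' != z).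
  move=> _; rewrite inE negbK => wY.
  split=> [w' /andP[ew _]|z]; first exact: Y_adj_X ew.
  have : 0 < #|[set w' | e w w'] :\ z|.
    by have := cardsD1 z [set w' | e w w']; rewrite reg; case: (z \in _) => /=; lia.
  case/card_gt0P => w'; rewrite !inE => /andP[w'z ew'].
  by exists w'; rewrite // /yedge ew' wY.
have [z /andP[zX rz] rdel] := exists_noncut_vertex yedge_sym rhoX outside.
exists z; rewrite /noncut zX (comp_eq arho) inE rz /=.
apply/forall_inP => u; rewrite inE => ru; apply/forall_inP => v; rewrite inE => rv.
apply/implyP => /andP[uz vz]; apply: connect_trans (rdel v rv vz).
by rewrite (sym_connect_sym (induced_sym _ yedge_sym)) rdel.
Qed.

(* The pivot of a component with an odd number of X-vertices is the non-cut
   vertex that [pick] selects for it. *)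
Definition pivots := [set z in X |
  odd #|X :&: comp z| && ([pick z' | noncut (comp z) z'] == Some z)].

Lemma pivots_sub : pivots \subset X.
Proof. by apply/subsetP => z /setIdP[]. Qed.

Lemma odd_comp_pivot z : z \in pivots -> odd #|X :&: comp z|.
Proof. by case/setIdP => _ /andP[]. Qed.

Lemma pivot_unique : {in pivots &, forall z z', connect yedge z z' -> z = z'}.
Proof.
move=> z z' /setIdP[_ /andP[_ /eqP pick_z]] /setIdP[_ /andP[_ /eqP pick_z']] rzz'.
by move: pick_z; rewrite (comp_eq rzz') pick_z' => -[].
Qed.

Lemma exists_pivot a : a \in X -> odd #|X :&: comp a| ->
  exists z, [/\ z \in pivots, connect yedge a z & noncut (comp a) z].
Proof.
move=> aX oa; have [z ncz pick_z] :
    exists2 z, noncut (comp a) z & [pick z' | noncut (comp a) z'] = Some z.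
  case: pickP => [z ncz|none]; first by exists z.
  by have [z] := exists_noncut aX; rewrite none.
have /and3P[zX + _] := ncz; rewrite inE => raz.
by exists z; split=> //; rewrite inE zX -(comp_eq raz) oa pick_z eqxx.
Qed.

Lemma five_le_comp_pivot z : z \in pivots -> 5 <= #|X :&: comp z|.
Proof.
move=> zD; have zX := subsetP pivots_sub z zD.
have [y yY ezy] : exists2 y, y \in Y & e z y by apply: domY; rewrite inE in zX.
have : d <= #|X :&: comp z|.
  rewrite -(reg y); apply: subset_leq_card; apply/subsetP => w; rewrite !inE => eyw.
  rewrite -in_setC (Y_adj_X yY eyw) /=.
  apply: (@connect_trans _ _ y); apply: connect1.
    by rewrite /yedge ezy yY orbT.
  by rewrite /yedge eyw yY.
move/(leq_trans d_ge4); rewrite leq_eqVlt => /orP[/eqP E|//].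
by move: (odd_comp_pivot zD); rewrite -E.
Qed.

Definition rest := X :\: pivots.

Definition yedge_rest := induced yedge (fun v => v \notin pivots).


Lemma rest_comp a : a \in rest ->
  [set v in rest | connect yedge_rest a v] = (X :&: comp a) :\: pivots.
Proof.
case/setDP=> aX aD; apply/setP => v.
apply/setIdP/setDP => [[/setDP[vX vD] rav] | [/setIP[vX]]].
  by split=> //; apply/setIP; split; rewrite // inE (connect_induced_sub rav).
rewrite inE => rav vD; split; first exact/setDP.
have [oa|ea] := boolP (odd #|X :&: comp a|); last first.
  apply: connect_induced rav => w raw; apply: contraNN ea => wD.
  by rewrite (comp_eq raw) odd_comp_pivot.
have [z [zD raz /and3P[_ _ /forall_inP ncz]]] := exists_pivot aX oa.
have az : a != z by apply: contraNneq aD => ->.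
have vz : v != z by apply: contraNneq vD => ->.
have rdel : connect (induced yedge (predC1 z)) a v.
  have a_comp : a \in comp a by rewrite inE connect0.
  have v_comp : v \in comp a by rewrite inE.
  by have /forall_inP/(_ v v_comp)/implyP := ncz a a_comp; rewrite az vz; apply.
have noD w : connect (induced yedge (predC1 z)) a w -> w \notin pivots.
  move=> raw; apply: contraTN (connect_induced_in raw az) => wD /=.
  rewrite negbK; apply/eqP/pivot_unique => //.
  by rewrite yconnect_sym (connect_trans _ (connect_induced_sub raw)) // yconnect_sym.
apply: connect_sub (connect_induced noD rdel) => x y /and3P[/and3P[rxy _ _] xD yD].
by apply: connect1; rewrite /yedge_rest /induced rxy xD yD.
Qed.

Lemma even_components_rest : even_components yedge_rest rest.
Proof.
move=> a aS; rewrite rest_comp //; case/setDP: aS => aX aD.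
have := cardsID pivots (X :&: comp a).
have [oa|ea] := boolP (odd #|X :&: comp a|); last first.
  suff -> : X :&: comp a :&: pivots = set0 by rewrite cards0 add0n => ->.
  apply/setP => w; rewrite in_set0; apply/negbTE/negP => /setIP[/setIP[_]].
  rewrite inE => raw wD.
  by move: ea; rewrite (comp_eq raw) odd_comp_pivot.
have [z [zD raz _]] := exists_pivot aX oa.
suff -> : X :&: comp a :&: pivots = [set z].
  by rewrite cards1 => E; move: oa; rewrite -E.
apply/setP => w; rewrite in_set1; apply/idP/eqP => [/setIP[/setIP[_]]|->].
  rewrite inE => raw wD; apply: pivot_unique => //.
  by rewrite yconnect_sym (connect_trans _ raw) // yconnect_sym.
have zX : z \in X := subsetP pivots_sub z zD.
by apply/setIP; split=> //; apply/setIP; split; rewrite // inE.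
Qed.

Lemma edges_yedge_rest A : A \in edges yedge_rest ->
  exists u v, [/\ A = [set u; v], e u v, u \in Y & v \in rest].
Proof.
rewrite inE => /existsP[u /existsP[v /andP[/and3P[/andP[euv uYvY] uD vD] /eqP ->]]].
have restP w y : w \notin pivots -> y \in Y -> e y w -> w \in rest.
  by move=> wD yY eyw; apply/setDP; split=> //; exact: Y_adj_X eyw.
case/orP: uYvY => [uY|vY]; first by exists u, v; split=> //; exact: restP uY euv.
have evu : e v u by rewrite se.
by exists v, u; split=> //; [exact: setUC | exact: restP vY evu].
Qed.

Lemma rest_le_f_o_line : #|rest| <= f_o_line e.
Proof.
have irr : irreflexive yedge_rest by move=> u; rewrite /yedge_rest /induced /yedge ie.
have [F [sF oddF]] :=
  tjoin_even_components (induced_sym _ yedge_sym) irr even_components_rest.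
have shapeF A : A \in F ->
    exists u v, [/\ A = [set u; v], e u v, u \in Y & v \in rest].
  by move=> AF; apply: edges_yedge_rest (subsetP sF A AF).
have restY u : u \in Y -> u \notin rest.
  by move=> uY; apply: contraL uY => /setDP[]; rewrite inE.
have sFe : F \subset edges e.
  apply/subsetP => A /shapeF[u [v [-> euv _ _]]].
  by rewrite inE; apply/existsP; exists u; apply/existsP; exists v; rewrite euv eqxx.
apply: (@leq_trans #|F|).
  apply: card_le_odd_deg => [x|A /shapeF[u [v [-> _ uY vS]]]]; first by rewrite oddF.
  rewrite -(cards1 v); apply: subset_leq_card; apply/subsetP => w /setIP[].
  rewrite in_set2 in_set1 => /orP[]/eqP-> // uS.
  by move: uS; rewrite (negbTE (restY u uY)).
rewrite /f_o_line /f_o; apply: leq_bigmax_cond.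
apply: odd_induced_line ie sFe _ => A /shapeF[u [v [-> euv uY vS]]].
have uv : u != v by apply: contraTneq euv => ->; rewrite ie.
by rewrite sum_deg_pair // oddD !oddF vS (negbTE (restY u uY)).
Qed.

Lemma card_pivots : 5 * #|pivots| <= #|X|.
Proof.
apply: card_mul_le_separated yconnect_sym pivot_unique _ => z zD.
suff -> : [set w in X | connect yedge z w] = X :&: comp z.
  exact: five_le_comp_pivot.
by apply/setP => w; rewrite !inE.
Qed.

Lemma two_card_le_five_f_o_line : 2 * #|T| <= 5 * f_o_line e.
Proof.
have d_gt0 : 0 < d := leq_trans (isT : 0 < 4) d_ge4.
have YX : #|Y| <= #|X| := card_stable_le_compl se reg d_gt0 stY.
have XD : #|pivots| + #|rest| = #|X|.
  by rewrite -(cardsID pivots X) (setIidPr pivots_sub).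
have := cardsC Y; have := card_pivots; have := rest_le_f_o_line; lia.
Qed.

End OddLineSubgraph.

(* With n = 5q + r and r < 5, integrality of f turns f >= 2n/5 into
   f >= 2q + r/2. *)
Lemma leq_twice_add_div5 (n f : nat) : 2 * n <= 5 * f -> n <= 2 * f + n %/ 5.
Proof.
by move=> le_nf; have := ltn_pmod n (isT : 0 < 5); have := divn_eq n 5; lia.
Qed.

Local Open Scope ring_scope.

Theorem mainTheorem10 (T : finType) (e : rel T) (d : nat) :
  simple_graph e -> regular e d -> (4 <= d)%N ->
  let n := #|T| in
  (n%:R / 2 - (n %/ 5)%:R / 2 <= (f_o_line e)%:R :> rat) /\
  (2 * n%:R / 5 <= n%:R / 2 - (n %/ 5)%:R / 2 :> rat).
Proof.
move=> [se ie] reg d_ge4 n.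
have [Y stY domY] := exists_maximal_stable se ie.
have := leq_twice_add_div5 (two_card_le_five_f_o_line se ie reg d_ge4 stY domY).
rewrite -(ler_nat rat) natrD natrM => le_n.
have : ((5 * (n %/ 5))%:R <= n%:R :> rat) by rewrite ler_nat mulnC leq_divM.
by rewrite natrM; split; lra.
Qed.
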